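(* Let $k\ge 3$. A binary linear $[N,k,D]$ Griesmer code $C$ is self-orthogonal if and only if $C$ is doubly-even.
   Context: A binary linear $[N,k,D]$ code is a Griesmer code if $N=\sum_{i=0}^{k-1}\lceil D/2^i\rceil$. A binary code is self-orthogonal if $C\subseteq C^\perp$ (standard inner product over $\mathbb{F}_2$). A binary code is doubly-even if every codeword has Hamming weight divisible by $4$. *)

From HB Require Import structures.
From mathcomp Require Import all_boot all_order all_algebra.
Set Implicit Arguments. Unset Strict Implicit. Unset Printing Implicit Defensive.
Import GRing.Theory.
Local Open Scope ring_scope.

Definition hwt (N : nat) (v : 'rV['F_2]_N) : nat := #|[set i | v 0 i != 0]|.

Definition dotF2 (N : nat) (u v : 'rV['F_2]_N) : 'F_2 := \sum_(i < N) u 0 i * v 0 i.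

Definition is_linear_code (N k D : nat) (C : {vspace 'rV['F_2]_N}) : Prop :=
  (\dim C = k)%N /\
  (exists2 c, c \in C & (c != 0) && (hwt c == D)) /\
  (forall c, c \in C -> c != 0 -> (D <= hwt c)%N).

Definition griesmer_sum (k D : nat) : nat :=
  (\sum_(i < k) ((D + 2 ^ i - 1) %/ 2 ^ i))%N.

Definition is_griesmer (N k D : nat) (C : {vspace 'rV['F_2]_N}) : Prop :=
  is_linear_code k D C /\ N = griesmer_sum k D.

Definition self_orthogonal (N : nat) (C : {vspace 'rV['F_2]_N}) : Prop :=
  forall u v, u \in C -> v \in C -> dotF2 u v = 0.

Definition doubly_even (N : nat) (C : {vspace 'rV['F_2]_N}) : Prop :=
  forall c, c \in C -> (4 %| hwt c)%N.

(* Since wt (u + v) = wt u + wt v - 2 |u /\ v| over F_2, a doubly-even code is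
   self-orthogonal, and in a self-orthogonal code all weights and overlaps
   |u /\ v| are even, so its doubly-even words form a subspace.
   The Griesmer bound is proved by the residual-code induction: for a word c of
   minimum weight, the complement V :\: <[c]> with weights counted off the
   support of c has dimension one less and minimum weight >= ceil(d/2), because
   the residual weight of u is (wt u + wt (u + c) - wt c) / 2.
   If D = 2 (mod 4), the residual weight of u is |u /\ (u + c)|, even and
   >= D/2, which is odd; so the residual code beats ceil(D/2) and N > g(k, D)
   once k >= 2.  If 4 | D, a word that is not doubly-even has weight >= D + 2,
   and the same induction, carried out with that extra slack, again gives
   N > g(k, D). *)

From HB Require Import structures.
From mathcomp Require Import all_boot all_order all_algebra zify.
Import GRing.Theory.
Set Implicit Arguments. Unset Strict Implicit. Unset Printing Implicit Defensive.
Local Open Scope ring_scope.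

Lemma pchar_F2 : (2 \in [pchar 'F_2])%N.
Proof. exact: pchar_Fp. Qed.

Lemma F2_0or1 (x : 'F_2) : x = 0 \/ x = 1.
Proof. by case: x => [[|[|n]] //] Hn; [left | right]; apply/val_inj. Qed.

Lemma F2_neq0D (x y : 'F_2) :
  ((x != 0%R) + (y != 0%R) = ((x + y)%R != 0%R) + 2 * ((x != 0%R) && (y != 0%R)))%N.
Proof. by case: x => [[|[|?]] ?] //; case: y => [[|[|?]] ?]. Qed.

Lemma F2_mulE (x y : 'F_2) : x * y = ((x != 0) && (y != 0))%:R.
Proof. by case: x => [[|[|?]] ?] //; case: y => [[|[|?]] ?] //; apply/val_inj. Qed.

Lemma F2_nat_eq0 n : ((n%:R : 'F_2) == 0) = (2 %| n)%N.
Proof. by rewrite (dvdn_pcharf pchar_F2). Qed.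

Lemma griesmer_sumS m d : griesmer_sum m.+1 d = (d + griesmer_sum m d.+1./2)%N.
Proof.
rewrite /griesmer_sum big_ord_recl /= expn0 divn1 addnK; congr (_ + _)%N.
apply: eq_bigr => i _; rewrite expnS divnMA; congr (_ %/ _)%N.
have : (0 < 2 ^ i)%N by rewrite expn_gt0.
move: (2 ^ i)%N => t; lia.
Qed.

Lemma leq_griesmer_sum m d d' : (d <= d')%N -> (griesmer_sum m d <= griesmer_sum m d')%N.
Proof.
move=> le_dd'; apply: leq_sum => i _.
by apply: leq_div2r; rewrite leq_sub2r // leq_add2r.
Qed.

Lemma ltn_griesmer_sumS m d : (griesmer_sum m.+1 d < griesmer_sum m.+1 d.+1)%N.
Proof.
rewrite !griesmer_sumS addSn ltnS leq_add2l.
by apply: leq_griesmer_sum; apply: half_leq.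
Qed.

Section BinaryWeights.
Variable N : nat.
Implicit Types (u v c : 'rV['F_2]_N) (S : {set 'I_N}) (V : {vspace 'rV['F_2]_N}).

Lemma addrr_F2 v : v + v = 0.
Proof. by rewrite -mulr2n -scaler_nat (pchar_Fp_0 (isT : prime 2)) scale0r. Qed.

Lemma addrKF2 u c : u + c + c = u.
Proof. by rewrite -addrA addrr_F2 addr0. Qed.

Lemma addr_eq0F2 u c : (u + c == 0) = (u == c).
Proof. by rewrite -(inj_eq (addIr c)) addrKF2 add0r. Qed.

Definition supp v : {set 'I_N} := [set i | v 0 i != 0].

Definition wt_on S v : nat := #|S :&: supp v|.

Lemma hwtE v : hwt v = #|supp v|.
Proof. by []. Qed.

Lemma supp0 : supp 0 = set0.
Proof. by apply/setP => i; rewrite !inE mxE eqxx. Qed.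

Lemma cardsI_sum S (A : {set 'I_N}) : #|S :&: A| = (\sum_(i in S) (i \in A))%N.
Proof.
rewrite -sum1_card big_mkcond [RHS]big_mkcond /=; apply: eq_bigr => i _.
by rewrite inE; case: (i \in S); case: (i \in A).
Qed.

Lemma wt_onD S u v :
  (wt_on S u + wt_on S v = wt_on S (u + v) + 2 * #|S :&: supp u :&: supp v|)%N.
Proof.
rewrite /wt_on -setIA !cardsI_sum -big_split big_distrr -big_split /=.
by apply: eq_bigr => i _; rewrite !inE mxE F2_neq0D.
Qed.

Lemma hwtD u v : (hwt u + hwt v = hwt (u + v) + 2 * #|supp u :&: supp v|)%N.
Proof. by have := wt_onD [set: 'I_N] u v; rewrite /wt_on !setTI. Qed.

Lemma dvd4_hwtD u v : (4 %| hwt u)%N -> (4 %| hwt v)%N ->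
  (4 %| hwt (u + v))%N = (2 %| #|supp u :&: supp v|)%N.
Proof. by have := hwtD u v; lia. Qed.

Lemma dotF2E u v : dotF2 u v = #|supp u :&: supp v|%:R.
Proof.
rewrite /dotF2 -sum1_card natr_sum [RHS]big_mkcond; apply: eq_bigr => i _.
by rewrite !inE F2_mulE; case: (_ && _).
Qed.

Lemma supp_meet_addr u c : supp u :&: supp (u + c) = supp u :\: supp c.
Proof.
apply/setP => i; rewrite !inE mxE.
by case: (u 0 i) => [[|[|?]] ?] //; case: (c 0 i) => [[|[|?]] ?].
Qed.

Lemma wt_on_residual S u c :
  (wt_on S u + wt_on S (u + c) = wt_on S c + 2 * wt_on (S :\: supp c) u)%N.
Proof.
by rewrite wt_onD addrA addrr_F2 add0r -setIA supp_meet_addr /wt_on setIDA setIDAC.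
Qed.

Lemma wt_onT v : wt_on [set: 'I_N] v = hwt v.
Proof. by rewrite /wt_on setTI. Qed.

Lemma wt_on_residualT u c : wt_on ([set: 'I_N] :\: supp c) u = #|supp u :&: supp (u + c)|.
Proof. by rewrite /wt_on supp_meet_addr setTD setIC setDE. Qed.

Lemma card_residual S c : #|S| = (#|S :\: supp c| + wt_on S c)%N.
Proof. by rewrite addnC cardsID. Qed.

Lemma addv_diff_line V c : c \in V -> (V :\: <[c]> + <[c]>)%VS = V.
Proof. by move=> cV; rewrite addv_diff; apply/addv_idPl; rewrite -memvE. Qed.

Lemma dim_diffv_line V c : c \in V -> c != 0 -> \dim (V :\: <[c]>) = (\dim V).-1.
Proof.
move=> cV c0; have := dimv_disjoint_sum (capv_diff V <[c]>).
by rewrite addv_diff_line // dim_vline c0 addn1 => ->.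
Qed.

Lemma notin_diffv_line V c : c != 0 -> c \notin (V :\: <[c]>)%VS.
Proof.
move=> c0; apply: contra c0 => cW.
by rewrite -memv0 -(capv_diff V <[c]>) memv_cap cW memv_line.
Qed.

Lemma diffv_lineP V c v : c \in V -> v \in V ->
  exists2 u, u \in (V :\: <[c]>)%VS & v = u \/ v = u + c.
Proof.
move=> cV; rewrite -{1}(addv_diff_line cV).
case/memv_addP=> u uW [_ /vlineP[a ->] ->]; exists u => //.
by case: (F2_0or1 a) => ->; [left; rewrite scale0r addr0 | right; rewrite scale1r].
Qed.

Lemma addr_diffv_line_neq0 V c u : c != 0 -> u \in (V :\: <[c]>)%VS -> u + c != 0.
Proof. by move=> c0 uW; rewrite addr_eq0F2; apply: contraTneq uW => ->; apply: notin_diffv_line. Qed.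

Lemma exists_min_wt_on S V : (0 < \dim V)%N ->
  exists c, [/\ c \in V, c != 0 & forall v, v \in V -> v != 0 -> (wt_on S c <= wt_on S v)%N].
Proof.
rewrite lt0n dimv_eq0 => V0.
have pickV : (vpick V \in V) && (vpick V != 0) by rewrite memv_pick vpick0.
have [c /andP[cV c0] cmin] := arg_minnP (P := fun v => (v \in V) && (v != 0)) (wt_on S) pickV.
by exists c; split=> // v vV v0; apply: cmin; rewrite vV.
Qed.

Lemma griesmer_bound S V d :
  (forall v, v \in V -> v != 0 -> (d <= wt_on S v)%N) -> (griesmer_sum (\dim V) d <= #|S|)%N.
Proof.
move Em : (\dim V) => m; elim: m S V Em d => [|m IH] S V dimV d minV.
  by rewrite /griesmer_sum big_ord0.
have := @exists_min_wt_on S V; rewrite dimV => /(_ isT) [c [cV c0 cmin]].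
apply: leq_trans (leq_griesmer_sum m.+1 (minV c cV c0)) _.
rewrite griesmer_sumS (card_residual S c) addnC leq_add2r.
apply: (IH _ (V :\: <[c]>)%VS); first by rewrite dim_diffv_line // dimV.
move=> u uW u0; have uV : u \in V := subvP (diffvSl V <[c]>) u uW.
have := cmin _ uV u0; have := cmin (u + c) (memvD uV cV) (addr_diffv_line_neq0 c0 uW).
have := wt_on_residual S u c; lia.
Qed.

Lemma griesmer_bound_strict S V (Q : pred 'rV['F_2]_N) d :
  (forall v, v \in V -> v != 0 -> (d <= wt_on S v)%N) ->
  (forall v, v \in V -> ~~ Q v -> (d.+2 <= wt_on S v)%N) ->
  {in V &, forall u v, Q u -> Q v -> Q (u + v)} ->
  (exists2 v, v \in V & ~~ Q v) ->
  (griesmer_sum (\dim V) d < #|S|)%N.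
Proof.
move Em : (\dim V) => m; elim: m S V Em d => [|m IH] S V dimV d minV minVQ addQ [v vV vQ].
  have := minVQ v vV vQ; move/eqP: dimV vV; rewrite dimv_eq0 => /eqP-> /vlineP[a ->].
  by rewrite scaler0 /wt_on supp0 setI0 cards0.
have := @exists_min_wt_on S V; rewrite dimV => /(_ isT) [c [cV c0 cmin]].
have [lt_d_c | le_c_d] := ltnP d (wt_on S c).
  apply: leq_trans (ltn_griesmer_sumS m d) _; rewrite -dimV; apply: griesmer_bound.
  by move=> u uV u0; apply: leq_trans lt_d_c (cmin u uV u0).
have wt_c : wt_on S c = d by apply/eqP; rewrite eqn_leq le_c_d minV.
have Qc : Q c by apply: contraT => /(minVQ c cV); rewrite wt_c; lia.
have subW : {subset (V :\: <[c]>)%VS <= V} by apply/subvP/diffvSl.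
have QcD u : u \in V -> Q (u + c) = Q u.
  move=> uV; apply/idP/idP => [Quc | Qu]; last exact: addQ.
  by rewrite -(addrKF2 u c) addQ // memvD.
rewrite griesmer_sumS (card_residual S c) wt_c addnC ltn_add2r.
apply: (IH _ (V :\: <[c]>)%VS); first by rewrite dim_diffv_line // dimV.
- move=> u uW u0; have uV := subW u uW.
  have := minV u uV u0; have := minV (u + c) (memvD uV cV) (addr_diffv_line_neq0 c0 uW).
  have := wt_on_residual S u c; rewrite wt_c; lia.
- move=> u uW Qu; have uV := subW u uW.
  have nQuc : ~~ Q (u + c) by rewrite QcD.
  have := minVQ u uV Qu; have := minVQ (u + c) (memvD uV cV) nQuc.
  have := wt_on_residual S u c; rewrite wt_c; lia.
- by move=> u w /subW uV /subW wV; apply: addQ.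
- have [u uW [vu | vuc]] := diffv_lineP cV vV; exists u => //.
    by rewrite -vu.
  by rewrite -QcD ?subW // -vuc.
Qed.

End BinaryWeights.

Lemma doubly_even_self_orthogonal N (C : {vspace 'rV['F_2]_N}) :
  doubly_even C -> self_orthogonal C.
Proof.
move=> deC u v uC vC; rewrite dotF2E; apply/eqP.
by rewrite F2_nat_eq0 -dvd4_hwtD ?deC ?memvD.
Qed.

Section SelfOrthogonal.
Variables (N : nat) (C : {vspace 'rV['F_2]_N}).
Hypothesis soC : self_orthogonal C.
Implicit Types u v c : 'rV['F_2]_N.

Lemma so_meet_even u v : u \in C -> v \in C -> (2 %| #|supp u :&: supp v|)%N.
Proof. by move=> uC vC; rewrite -F2_nat_eq0 -dotF2E soC. Qed.

Lemma so_hwt_even u : u \in C -> (2 %| hwt u)%N.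
Proof. by move=> uC; rewrite hwtE -[supp u]setIid so_meet_even. Qed.

Lemma so_dvd4_hwtD u v :
  u \in C -> v \in C -> (4 %| hwt u)%N -> (4 %| hwt v)%N -> (4 %| hwt (u + v))%N.
Proof. by move=> uC vC u4 v4; rewrite dvd4_hwtD ?so_meet_even. Qed.

Lemma so_griesmer_sum_lt_not_doubly_even D :
  (4 %| D)%N -> (forall c, c \in C -> c != 0 -> (D <= hwt c)%N) ->
  (exists2 c, c \in C & ~~ (4 %| hwt c)%N) -> (griesmer_sum (\dim C) D < N)%N.
Proof.
move=> D4 minC nDE.
suff : (griesmer_sum (\dim C) D < #|[set: 'I_N]|)%N by rewrite cardsT card_ord.
apply: (griesmer_bound_strict (Q := fun v => 4 %| hwt v)%N) nDE.
- by move=> v vC v0; rewrite wt_onT minC.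
- move=> v vC nv4; rewrite wt_onT.
  have v0 : v != 0 by apply: contraNneq nv4 => ->; rewrite hwtE supp0 cards0.
  by have := minC v vC v0; have := so_hwt_even vC; lia.
- by move=> u v uC vC; apply: so_dvd4_hwtD.
Qed.

Lemma so_griesmer_sum_lt_min_wt_2mod4 D c0 :
  (1 < \dim C)%N -> c0 \in C -> c0 != 0 -> hwt c0 = D ->
  (forall c, c \in C -> c != 0 -> (D <= hwt c)%N) ->
  ~~ (4 %| D)%N -> (griesmer_sum (\dim C) D < N)%N.
Proof.
move=> dimC c0C c00 wt_c0 minC nD4.
have D2 : (2 %| D)%N by rewrite -wt_c0 so_hwt_even.
have resid : (griesmer_sum (\dim C).-1 (D./2).+1 <= #|[set: 'I_N] :\: supp c0|)%N.
  rewrite -(dim_diffv_line c0C c00); apply: griesmer_bound => u uW u0.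
  have uC : u \in C by apply: subvP (diffvSl C <[c0]>) u uW.
  have := minC u uC u0; have := minC (u + c0) (memvD uC c0C) (addr_diffv_line_neq0 c00 uW).
  have := wt_on_residual [set: 'I_N] u c0; rewrite !wt_onT wt_c0.
  have := so_meet_even uC (memvD uC c0C); rewrite -wt_on_residualT; lia.
suff : (griesmer_sum (\dim C) D < #|[set: 'I_N]|)%N by rewrite cardsT card_ord.
rewrite (card_residual _ c0) wt_onT wt_c0.
case: (\dim C) dimC resid => [|[|m]] // _; rewrite griesmer_sumS addnC ltn_add2r.
have -> : D.+1./2 = D./2 by lia.
exact/leq_trans/ltn_griesmer_sumS.
Qed.

End SelfOrthogonal.

Theorem proposition3p8 (N k D : nat) (C : {vspace 'rV['F_2]_N}) :
  (3 <= k)%N -> is_griesmer k D C ->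
  (self_orthogonal C <-> doubly_even C).
Proof.
move=> k_ge3 [[dimC [[c0 c0C /andP[c00 /eqP wt_c0]] minC]] NE].
split=> [soC|]; last exact: doubly_even_self_orthogonal.
have D4 : (4 %| D)%N.
  apply: contraT => nD4.
  have := so_griesmer_sum_lt_min_wt_2mod4 soC _ c0C c00 wt_c0 minC nD4.
  by rewrite dimC -NE ltnn; apply; apply: leq_trans k_ge3.
move=> c cC; apply: contraT => nc4.
have := so_griesmer_sum_lt_not_doubly_even soC D4 minC (ex_intro2 _ _ c cC nc4).
by rewrite dimC -NE ltnn.
Qed.
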